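(* For any online learning algorithm with prior knowledge of the horizon $T$, the delay $\tau$ and a number $\bar V\ge V^{\tau+1}_T$, there exists a sequence of linear losses $f_t(x)=\langle g_t,x\rangle$ such that, if the feedback is subject to constant delay $\tau$ (the feedback $g_t$ becomes available only after $\tau$ further rounds), the regret $\sum_{t=1}^T\langle g_t,x_t-p\rangle$ of the algorithm on this sequence with respect to some vector $p$ with $\|p-x_1\|\le1$ is $\Omega(\sqrt{\tau\bar V})$.
   Context: Online linear optimization in a Euclidean space (unconstrained), where $x_t$ denotes the point played at round $t$ and $x_1$ the initial point. Convention $g_t=0$ for $t\le0$. The $(\tau+1)$-variation is $V^{\tau+1}_T=\sum_{t=1}^T\|g_t-g_{t-\tau-1}\|^2$. *)

From HB Require Import structures.
From mathcomp Require Import all_boot all_order all_algebra.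
From mathcomp Require Import reals.
Set Implicit Arguments. Unset Strict Implicit. Unset Printing Implicit Defensive.
Import Order.TTheory GRing.Theory Num.Theory.
Local Open Scope ring_scope.

Definition dotv (R : realType) (d : nat) (u v : 'rV[R]_d) : R :=
  \sum_(i < d) u ord0 i * v ord0 i.
Definition enorm (R : realType) (d : nat) (v : 'rV[R]_d) : R :=
  Num.sqrt (dotv v v).

(* gradient at round t (t >= 1), with the convention g_t = 0 for t <= 0:
   gback g k t = g_{t-k} *)
Definition gback (R : realType) (d : nat) (g : nat -> 'rV[R]_d) (k t : nat)
  : 'rV[R]_d := if (t <= k)%N then 0 else g (t - k)%N.

Definition variation (R : realType) (d : nat) (g : nat -> 'rV[R]_d)
  (tau T : nat) : R :=
  \sum_(1 <= t < T.+1) enorm (g t - gback g tau.+1 t) ^+ 2.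

(* A deterministic online algorithm: at round t it receives the list of
   feedback available so far and outputs x_t. *)
Definition algorithm (R : realType) (d : nat) :=
  nat -> seq 'rV[R]_d -> 'rV[R]_d.

(* Point played at round t under constant delay tau: the feedback g_s is
   available only from round s + tau + 1 on, so at round t the learner
   knows exactly g_1, ..., g_{t - tau - 1}. *)
Definition play_delayed (R : realType) (d : nat) (A : algorithm R d)
  (g : nat -> 'rV[R]_d) (tau t : nat) : 'rV[R]_d :=
  A t [seq g s | s <- iota 1 (t - tau.+1)].

Definition regret_delayed (R : realType) (d : nat) (A : algorithm R d)
  (g : nat -> 'rV[R]_d) (tau T : nat) (p : 'rV[R]_d) : R :=
  \sum_(1 <= t < T.+1) dotv (g t) (play_delayed A g tau t - p).

From HB Require Import structures.
From mathcomp Require Import all_boot all_order all_algebra.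
From mathcomp Require Import reals.
From mathcomp Require Import zify ring lra.
Import Order.TTheory GRing.Theory Num.Theory.
Local Open Scope ring_scope.

(* During the first tau + 1 rounds a learner with delay tau has received no
   feedback, so its plays x_1, ..., x_tau are fixed in advance.  The adversary
   sends the constant gradient b e on these rounds and 0 afterwards, where the
   unit vector e is +-e_1, the sign chosen so that sum_{t <= tau} <e, x_t - x_1>
   is nonnegative.  Against p = x_1 - e every such round costs at least b, so
   the regret is at least b tau, while the sequence only jumps (by b) at the
   tau rounds where the pulse starts and the tau rounds where its delayed copy
   does, so its (tau+1)-variation is at most 2 tau b^2.  The choice
   b = sqrt(tau Vbar) / (2 tau) balances the two. *)

Section InnerProduct.
Context {R : realType} {d : nat}.
Implicit Types (u v w : 'rV[R]_d) (k : R).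

Lemma dotvZl k u v : dotv (k *: u) v = k * dotv u v.
Proof. by rewrite /dotv mulr_sumr; apply: eq_bigr => i _; rewrite mxE mulrA. Qed.

Lemma dotvZr k u v : dotv u (k *: v) = k * dotv u v.
Proof. by rewrite /dotv mulr_sumr; apply: eq_bigr => i _; rewrite mxE mulrCA. Qed.

Lemma dotvDr u v w : dotv u (v + w) = dotv u v + dotv u w.
Proof. by rewrite /dotv -big_split; apply: eq_bigr => i _; rewrite mxE mulrDr. Qed.

Lemma dotvv_ge0 v : 0 <= dotv v v.
Proof. by apply: sumr_ge0 => i _; rewrite -expr2 sqr_ge0. Qed.

Lemma enorm_sqr v : enorm v ^+ 2 = dotv v v.
Proof. by rewrite /enorm sqr_sqrtr ?dotvv_ge0. Qed.

Lemma enormZ k v : enorm (k *: v) = `|k| * enorm v.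
Proof.
by rewrite /enorm dotvZl dotvZr mulrA -expr2 sqrtrM ?sqr_ge0 // sqrtr_sqr.
Qed.

Lemma enorm0 : enorm (0 : 'rV[R]_d) = 0.
Proof. by rewrite /enorm /dotv big1 ?sqrtr0 // => i _; rewrite mxE mul0r. Qed.

Lemma enormN v : enorm (- v) = enorm v.
Proof. by rewrite -scaleN1r enormZ normrN1 mul1r. Qed.

Lemma enorm_delta (i : 'I_d) : enorm (delta_mx 0 i : 'rV[R]_d) = 1.
Proof.
rewrite /enorm /dotv (bigD1 i) //= big1 ?addr0 => [|j /negbTE neq_ji].
  by rewrite mxE !eqxx mulr1 sqrtr1.
by rewrite mxE neq_ji andbF mul0r.
Qed.

End InnerProduct.

Lemma exists_sign_mul_ge0 {R : realFieldType} (x : R) :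
  exists s : R, `|s| = 1 /\ 0 <= s * x.
Proof.
have [x_ge0|x_lt0] := lerP 0 x.
  by exists 1; rewrite normr1 mul1r.
by exists (-1); rewrite normrN1 mulN1r oppr_ge0 ltW.
Qed.

Lemma play_delayed_blind (R : realType) (d : nat) (A : algorithm R d)
    (g : nat -> 'rV[R]_d) (tau t : nat) :
  (t <= tau.+1)%N -> play_delayed A g tau t = A t [::].
Proof. by rewrite /play_delayed -subn_eq0 => /eqP ->. Qed.

Lemma sum_indicator_itv (lo hi n : nat) :
  (\sum_(1 <= t < n.+1) (lo < t <= hi) = minn n hi - lo)%N.
Proof.
elim: n => [|n IHn]; first by rewrite big_geq // min0n.
rewrite big_nat_recr //= IHn; case: (boolP (lo < n.+1 <= hi)%N) => /= ?; lia.
Qed.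

Section Pulse.
Context {R : realType} {d : nat}.
Variables (b : R) (e : 'rV[R]_d) (tau : nat).
Hypothesis e_unit : enorm e = 1.

Definition pulse (t : nat) : 'rV[R]_d := if (t <= tau)%N then b *: e else 0.

Lemma enorm_scale_unit (k : R) : enorm (k *: e) ^+ 2 = k ^+ 2.
Proof. by rewrite enormZ e_unit mulr1 real_normK ?num_real. Qed.

Lemma pulse_variation_term (t : nat) : (0 < t)%N ->
  enorm (pulse t - gback pulse tau.+1 t) ^+ 2
  = b ^+ 2 *+ ((0 < t <= tau) + (tau.+1 < t <= tau.*2.+1))%N.
Proof.
move=> t_gt0; rewrite /gback /pulse t_gt0 /=.
have [t_le|t_gt] := leqP t tau.
  rewrite leqW // subr0 enorm_scale_unit.
  by have -> : (tau.+1 < t)%N = false by lia.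
have -> : (t - tau.+1 <= tau)%N = (t <= tau.*2.+1)%N by lia.
rewrite sub0r enormN; case: leqP => _ /=; first by rewrite enorm0 expr0n.
by case: ifP => _; rewrite ?enorm_scale_unit ?enorm0 ?expr0n.
Qed.

Lemma variation_pulse (T : nat) : variation pulse tau T <= b ^+ 2 *+ tau.*2.
Proof.
rewrite /variation.
under eq_big_nat => t /andP[t_gt0 _] do rewrite pulse_variation_term //.
rewrite sumrMnr.
apply: ler_wpMn2l; first exact: sqr_ge0.
rewrite big_split /= !sum_indicator_itv; lia.
Qed.

Lemma regret_pulse (A : algorithm R d) (T : nat) : (tau <= T)%N ->
  regret_delayed A pulse tau T (A 1%N [::] - e)
  = b * (\sum_(1 <= t < tau.+1) dotv e (A t [::] - A 1%N [::]) + tau%:R).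
Proof.
move=> le_tau_T; have e_dot : dotv e e = 1 by rewrite -enorm_sqr e_unit expr1n.
rewrite /regret_delayed (@big_cat_nat _ _ _ tau.+1) ?ltnS //=.
rewrite [X in _ + X]big1_seq ?addr0 => [|t]; last first.
  rewrite mem_index_iota => /and3P[_ t_gt _].
  by rewrite /pulse leqNgt t_gt -(scale0r e) dotvZl mul0r.
have -> : tau%:R = \sum_(1 <= t < tau.+1) (1 : R).
  by rewrite sumr_const_nat subSS subn0.
rewrite -big_split mulr_sumr /=.
apply: eq_big_nat => t /andP[_ le_t]; rewrite ltnS in le_t.
rewrite /pulse le_t play_delayed_blind 1?leqW // dotvZl opprB addrA addrAC.
by rewrite (dotvDr e (A t [::] - A 1%N [::])) e_dot.
Qed.

End Pulse.

Section PulseHeight.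
Context {R : realType}.
Variables (tau : nat) (V : R).

Definition pulse_height : R := Num.sqrt (tau%:R * V) / (2 * tau%:R).

Lemma pulse_height_ge0 : 0 <= V -> 0 <= pulse_height.
Proof. by move=> V_ge0; rewrite divr_ge0 ?sqrtr_ge0 ?mulr_ge0 ?ler0n. Qed.

Lemma pulse_height_variation : 0 <= V -> pulse_height ^+ 2 *+ tau.*2 <= V.
Proof.
move=> V_ge0; have [->|tau_gt0] := posnP tau; first by rewrite mulr0n.
have tau_neq0 : tau%:R != 0 :> R by rewrite pnatr_eq0 -lt0n.
rewrite -mulr_natr expr_div_n sqr_sqrtr ?mulr_ge0 ?ler0n // -muln2 natrM.
rewrite [X in X <= _](_ : _ = V / 2); first lra.
by field.
Qed.

Lemma pulse_height_mul_tau : pulse_height * tau%:R = Num.sqrt (tau%:R * V) / 2.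
Proof.
have [->|tau_gt0] := posnP tau; first by rewrite mul0r sqrtr0 mulr0 mul0r.
have tau_neq0 : tau%:R != 0 :> R by rewrite pnatr_eq0 -lt0n.
by rewrite /pulse_height; field.
Qed.

End PulseHeight.

Theorem proposition6 (R : realType) :
  exists c : R, 0 < c /\
  forall (d T tau : nat) (Vbar : R), (0 < d)%N -> (tau <= T)%N -> 0 <= Vbar ->
  forall A : algorithm R d,
  exists g : nat -> 'rV[R]_d,
    variation g tau T <= Vbar /\
    exists p : 'rV[R]_d,
      enorm (p - play_delayed A g tau 1) <= 1 /\
      c * Num.sqrt (tau%:R * Vbar) <= regret_delayed A g tau T p.
Proof.
exists (1 / 2); split => [|d T tau V d_gt0 le_tau_T V_ge0 A]; first lra.
pose x1 := A 1%N [::]; pose e1 : 'rV[R]_d := delta_mx 0 (Ordinal d_gt0).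
have [s [s_unit s_sum_ge0]] :=
  exists_sign_mul_ge0 (\sum_(1 <= t < tau.+1) dotv e1 (A t [::] - x1)).
pose e := s *: e1; have e_unit : enorm e = 1 by rewrite enormZ s_unit enorm_delta mul1r.
pose b := pulse_height tau V.
exists (pulse b e tau); split.
  exact: le_trans (variation_pulse _ _ _ e_unit T) (pulse_height_variation _ _ V_ge0).
exists (x1 - e); split.
  by rewrite play_delayed_blind // -/x1 addrAC subrr add0r enormN e_unit.
rewrite regret_pulse //.
have -> : \sum_(1 <= t < tau.+1) dotv e (A t [::] - x1)
          = s * \sum_(1 <= t < tau.+1) dotv e1 (A t [::] - x1).
  by rewrite mulr_sumr; apply: eq_bigr => t _; rewrite dotvZl.
have b_ge0 : 0 <= b := pulse_height_ge0 _ _ V_ge0.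
apply: le_trans (_ : b * tau%:R <= _); last by rewrite ler_wpM2l // lerDr.
rewrite pulse_height_mul_tau; lra.
Qed.
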